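(* For every $n\geq1$, the RBM variety $V^1_n$ coincides with the first secant variety (the Zariski closure of the union of all secant lines) of the Segre embedding of $(\mathbb{P}^1)^n$ into $\mathbb{P}^{2^n-1}$, and the tropical RBM variety $TV^1_n$ is the tropicalization of that secant variety.
   Context: The RBM model $M^1_n$ is the subset of the open simplex $\Delta_{2^n-1}$ consisting of all vectors $(p(v))_{v\in\{0,1\}^n}$ with $p(v)=\frac1Z\beta_1^{v_1}\cdots\beta_n^{v_n}(1+\gamma\,\omega_1^{v_1}\cdots\omega_n^{v_n})$, where all parameters range over $\mathbb{R}_{>0}$ and $Z$ normalizes the coordinates to sum to one. The RBM variety $V^1_n$ is the Zariski closure of $M^1_n$ in the complex projective space $\mathbb{P}^{2^n-1}$ (coordinates indexed by $v\in\{0,1\}^n$), and the tropical RBM variety $TV^1_n\subseteq\mathbb{R}^{2^n}/\mathbb{R}(1,\dots,1)$ is the tropicalization of $V^1_n$, i.e. the intersection of the tropical hypersurfaces of all polynomials vanishing on $V^1_n$. The Segre embedding sends $((x_0^{(1)}:x_1^{(1)}),\dots,(x_0^{(n)}:x_1^{(n)}))$ to the point with coordinates $\prod_i x^{(i)}_{v_i}$, $v\in\{0,1\}^n$. *)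

From HB Require Import structures.
From mathcomp Require Import all_boot all_order all_algebra.
From mathcomp Require Import Rstruct.
From mathcomp Require Import mpoly.
From mathcomp Require Import complex.
From Stdlib Require Import Reals.

Set Implicit Arguments.
Unset Strict Implicit.
Unset Printing Implicit Defensive.

Import Order.TTheory GRing.Theory Num.Theory.
Local Open Scope ring_scope.

Definition bitvec (n : nat) := {ffun 'I_n -> bool}.

Definition ncoord (n : nat) : nat := #|{: bitvec n}|.

Definition CC : fieldType := R[i].
Definition toC (x : R) : CC := (x%:C)%C.

Definition cvec (n : nat) := bitvec n -> CC.

Definition nonzero_vec n (x : cvec n) : Prop := exists v, x v != 0.

(* Polynomials with complex coefficients in the 2^n coordinates p(v);
   the variable 'X_i corresponds to the coordinate v = enum_val i. *)
Definition cpoly (n : nat) := {mpoly CC[ncoord n]}.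

Definition peval n (f : cpoly n) (x : cvec n) : CC :=
  f.@[fun i : 'I_(ncoord n) => x (enum_val i)].

Definition homogeneous n (f : cpoly n) : Prop :=
  exists d : nat, forall m, m \in msupp f -> mdeg m = d.

(* A subset of P^{2^n-1} is represented by its affine cone (a set of
   nonzero vectors closed under nonzero scaling). *)
Definition zclosure n (S : cvec n -> Prop) : cvec n -> Prop :=
  fun x => nonzero_vec x /\
    forall f : cpoly n, homogeneous f ->
      (forall y, S y -> peval f y = 0) -> peval f x = 0.

Definition rbm_unnorm n (beta omega : 'I_n -> R) (gamma : R) (v : bitvec n) : R :=
  (\prod_(i < n) beta i ^+ v i) * (1 + gamma * \prod_(i < n) omega i ^+ v i).

Definition rbm_point n (beta omega : 'I_n -> R) (gamma : R) (v : bitvec n) : R :=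
  rbm_unnorm beta omega gamma v / (\sum_(u : bitvec n) rbm_unnorm beta omega gamma u).

Definition rbm_model n (p : bitvec n -> R) : Prop :=
  exists (beta omega : 'I_n -> R) (gamma : R),
    (forall i, 0 < beta i) /\ (forall i, 0 < omega i) /\ 0 < gamma /\
    p = rbm_point beta omega gamma.

Definition cone_of_real n (S : (bitvec n -> R) -> Prop) : cvec n -> Prop :=
  fun x => exists (p : bitvec n -> R) (c : CC),
    S p /\ c != 0 /\ x = (fun v => c * toC (p v)).

Definition rbm_variety n : cvec n -> Prop := zclosure (cone_of_real (@rbm_model n)).

Definition segre_cone n (x : cvec n) : Prop :=
  exists a : 'I_n -> CC * CC,
    (forall i, a i != (0, 0)) /\
    x = (fun v => \prod_(i < n) (if v i then (a i).2 else (a i).1)).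

Definition secant_union n (x : cvec n) : Prop :=
  nonzero_vec x /\
  exists s t : cvec n, segre_cone s /\ segre_cone t /\
    ~ (exists c : CC, forall v, s v = c * t v) /\
    exists lambda mu : CC, x = (fun v => lambda * s v + mu * t v).

Definition secant_variety n : cvec n -> Prop := zclosure (@secant_union n).

Definition wdot n (w : bitvec n -> R) (m : 'X_{1.. ncoord n}) : R :=
  \sum_(i < ncoord n) w (enum_val i) * (m i)%:R.

Definition trop_hyp n (f : cpoly n) (w : bitvec n -> R) : Prop :=
  f = 0 \/
  exists a b, a \in msupp f /\ b \in msupp f /\ a != b /\
    wdot w a = wdot w b /\
    forall c, c \in msupp f -> wdot w a <= wdot w c.

(* Represented as a
   subset of R^{2^n} (it is invariant under adding multiples of (1,...,1)). *)
Definition tropicalization n (V : cvec n -> Prop) : (bitvec n -> R) -> Prop :=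
  fun w => forall f : cpoly n, (forall x, V x -> peval f x = 0) -> trop_hyp f w.

(* Both varieties are Zariski closures, so it suffices that a polynomial vanishes
   on the (cone over the) RBM model iff it vanishes on the union of secant lines;
   tropicalization depends only on the variety, so the second claim follows.
   An RBM point is a positive combination of the Segre points (1, beta_i)_i and
   (1, beta_i omega_i)_i, hence lies on a secant line (n >= 1 leaves room for a
   second Segre point when these two coincide).  Conversely, lambda s + mu t with
   s, t Segre points is a polynomial in its 4n + 2 parameters, and for positive
   real parameters it is a positive multiple of an RBM point; a function that is
   polynomial in each variable separately and vanishes on the positive orthant
   vanishes everywhere. *)

From HB Require Import structures.
From mathcomp Require Import all_boot all_order all_algebra.
From mathcomp Require Import Rstruct mpoly complex.
From Stdlib Require Import Reals FunctionalExtensionality.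

Set Implicit Arguments.
Unset Strict Implicit.
Unset Printing Implicit Defensive.

Import Order.TTheory GRing.Theory Num.Theory.
Local Open Scope ring_scope.
(* [Reals] binds [R] to [R_scope] and rebinds the [%N] delimiter to [BinNat];
   restore the ring notations on [R] and ssrnat's [%N]. *)
Local Bind Scope ring_scope with R.
Delimit Scope nat_scope with N.

HB.instance Definition _ := GRing.RMorphism.copy toC (@real_complex R).

Section PolynomialFunctions.
Variable K : comNzRingType.

Definition polynomial_fun (h : K -> K) := exists Q : {poly K}, forall z, h z = Q.[z].

Lemma polynomial_fun_ext h1 h2 :
  h1 =1 h2 -> polynomial_fun h1 -> polynomial_fun h2.
Proof. by move=> E [Q HQ]; exists Q => z; rewrite -E. Qed.

Lemma polynomial_funC c : polynomial_fun (fun _ => c).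
Proof. by exists c%:P => z; rewrite hornerC. Qed.

Lemma polynomial_funX : polynomial_fun (fun z => z).
Proof. by exists 'X => z; rewrite hornerX. Qed.

Lemma polynomial_funD h1 h2 :
  polynomial_fun h1 -> polynomial_fun h2 -> polynomial_fun (fun z => h1 z + h2 z).
Proof. by move=> [P HP] [Q HQ]; exists (P + Q) => z; rewrite hornerD HP HQ. Qed.

Lemma polynomial_funM h1 h2 :
  polynomial_fun h1 -> polynomial_fun h2 -> polynomial_fun (fun z => h1 z * h2 z).
Proof. by move=> [P HP] [Q HQ]; exists (P * Q) => z; rewrite hornerM HP HQ. Qed.

Lemma polynomial_funXn h k : polynomial_fun h -> polynomial_fun (fun z => h z ^+ k).
Proof. by move=> [P HP]; exists (P ^+ k) => z; rewrite horner_exp HP. Qed.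

Lemma polynomial_fun_sum (I : Type) (r : seq I) (F : I -> K -> K) :
  (forall i, polynomial_fun (F i)) -> polynomial_fun (fun z => \sum_(i <- r) F i z).
Proof.
move=> HF; elim: r => [|a r IH].
  by apply: polynomial_fun_ext (polynomial_funC 0) => z; rewrite big_nil.
by apply: polynomial_fun_ext (polynomial_funD (HF a) IH) => z; rewrite big_cons.
Qed.

Lemma polynomial_fun_prod (I : Type) (r : seq I) (F : I -> K -> K) :
  (forall i, polynomial_fun (F i)) -> polynomial_fun (fun z => \prod_(i <- r) F i z).
Proof.
move=> HF; elim: r => [|a r IH].
  by apply: polynomial_fun_ext (polynomial_funC 1) => z; rewrite big_nil.
by apply: polynomial_fun_ext (polynomial_funM (HF a) IH) => z; rewrite big_cons.
Qed.

Lemma polynomial_fun_meval k (f : {mpoly K[k]}) (h : 'I_k -> K -> K) :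
  (forall i, polynomial_fun (h i)) -> polynomial_fun (fun z => f.@[fun i => h i z]).
Proof.
move=> Hh; apply: polynomial_fun_ext (fun z => esym (mevalE _ _)) _.
apply: polynomial_fun_sum => m; apply: polynomial_funM; first exact: polynomial_funC.
by apply: polynomial_fun_prod => i; apply: polynomial_funXn.
Qed.

End PolynomialFunctions.

Lemma poly_eq0_on_pos (Q : {poly CC}) :
  (forall r : R, 0 < r -> Q.[toC r] = 0) -> Q = 0.
Proof.
move=> HQ; pose s := mkseq (fun i => toC i.+1%:R) (size Q).
apply: (@roots_geq_poly_eq0 _ Q s); last by rewrite size_mkseq.
- by apply/allP => _ /mapP[i _ ->]; apply/rootP/HQ; rewrite ltr0Sn.
- rewrite map_inj_uniq ?iota_uniq // => i j /complexI/eqP.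
  by rewrite eqr_nat eqSS => /eqP.
Qed.

Lemma polynomial_in_each_coord_eq0 (I : finType) (F : (I -> CC) -> CC) :
  (forall p i, polynomial_fun (fun z => F [eta p with i |-> z])) ->
  (forall r : I -> R, (forall i, 0 < r i) -> F (toC \o r) = 0) ->
  forall p, F p = 0.
Proof.
move=> Fpoly Fpos.
suff Fagree : forall (s : seq I) (r : I -> R) p, (forall i, 0 < r i) ->
    (forall i, i \notin s -> p i = toC (r i)) -> F p = 0.
  by move=> p; apply: (Fagree (enum I) (fun _ => 1)) => // i; rewrite mem_enum.
elim=> [|j s IHs] r p r_gt0 p_r.
  have -> : p = toC \o r by apply: functional_extensionality => i; apply: p_r.
  exact: Fpos.
have [Q FQ] := Fpoly p j.
have -> : p = [eta p with j |-> p j].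
  by apply: functional_extensionality => i /=; case: eqP => // ->.
suff Q0 : Q = 0 by rewrite FQ Q0 horner0.
apply: poly_eq0_on_pos => t t_gt0; rewrite -FQ.
apply: (IHs [eta r with j |-> t]) => [i | i i_s] /=; case: eqP => // /eqP ij.
by apply: p_r; rewrite inE negb_or ij.
Qed.

Section SegreVectors.
Variables (K : comNzRingType) (n : nat).

Definition segre_vec (a : 'I_n -> K * K) (v : bitvec n) : K :=
  \prod_(i < n) (if v i then (a i).2 else (a i).1).

Definition segre_chart (b : 'I_n -> K) (v : bitvec n) : K := \prod_(i < n) b i ^+ v i.

Lemma segre_chartE b v : segre_chart b v = segre_vec (fun i => (1, b i)) v.
Proof. by apply: eq_bigr => i _; case: (v i). Qed.

Lemma segre_chartM b b' v :
  segre_chart (fun i => b i * b' i) v = segre_chart b v * segre_chart b' v.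
Proof. by rewrite -big_split; apply: eq_bigr => i _; rewrite exprMn. Qed.

(* The parameters of a point on a secant line: [p (s, None)] is the coefficient
   of the [s]-th Segre point and [p (s, Some (i, e))] its [e]-th coordinate on
   the [i]-th factor [P^1]. *)
Definition secant_param (p : bool * option ('I_n * bool) -> K) (v : bitvec n) : K :=
  \sum_(s : bool) p (s, None) *
    segre_vec (fun i => (p (s, Some (i, false)), p (s, Some (i, true)))) v.

Definition secant_coords (l m : K) (a b : 'I_n -> K * K) k : K :=
  match k with
  | (false, None) => l
  | (true, None) => m
  | (s, Some (i, e)) => let c := if s then b i else a i in if e then c.2 else c.1
  end.

Lemma secant_paramE (l m : K) (a b : 'I_n -> K * K) :
  secant_param (secant_coords l m a b) =1 (fun v => l * segre_vec a v + m * segre_vec b v).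
Proof. by move=> v; rewrite /secant_param big_bool /= addrC. Qed.

Lemma polynomial_fun_secant_param p k v :
  polynomial_fun (fun z => secant_param [eta p with k |-> z] v).
Proof.
have coord j : polynomial_fun (fun z => [eta p with k |-> z] j).
  by rewrite /=; case: eqP => _; [exact: polynomial_funX | exact: polynomial_funC].
apply: polynomial_fun_sum => s; apply: polynomial_funM; first exact: coord.
by apply: polynomial_fun_prod => i; case: (v i); apply: coord.
Qed.

End SegreVectors.

Lemma rmorph_segre_vec (K L : comNzRingType) (f : {rmorphism K -> L}) n
    (a : 'I_n -> K * K) v :
  f (segre_vec a v) = segre_vec (fun i => (f (a i).1, f (a i).2)) v.
Proof. by rewrite rmorph_prod; apply: eq_bigr => i _; case: (v i). Qed.

Lemma segre_vec_chart (K : fieldType) n (a : 'I_n -> K * K) v :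
  (forall i, (a i).1 != 0) ->
  segre_vec a v = (\prod_(i < n) (a i).1) * segre_chart (fun i => (a i).2 / (a i).1) v.
Proof.
move=> a1_neq0; rewrite -big_split; apply: eq_bigr => i _ /=.
by case: (v i); rewrite ?expr1 ?expr0 ?mulr1 // mulrC divfK.
Qed.

Lemma segre_chart_inj (K : fieldType) n (b b' : 'I_n -> K) (d : K) :
  (forall v, segre_chart b v = d * segre_chart b' v) -> b =1 b'.
Proof.
move=> prop j.
have segre_chart0 c : segre_chart c [ffun => false] = 1.
  by rewrite /segre_chart big1 // => i _; rewrite ffunE.
have segre_chart_unit c : segre_chart c [ffun i => i == j] = c j.
  rewrite /segre_chart (bigD1 j) //= ffunE eqxx big1 ?mulr1 // => i /negbTE ij.
  by rewrite ffunE ij.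
have := prop [ffun => false]; rewrite !segre_chart0 mulr1 => d1.
by have := prop [ffun i => i == j]; rewrite !segre_chart_unit -d1 mul1r.
Qed.

Section RBMParametrization.
Variable n : nat.
Implicit Types (beta omega b : 'I_n -> R) (gamma : R) (v : bitvec n).

Lemma rbm_unnormE beta omega gamma v :
  rbm_unnorm beta omega gamma v =
  segre_chart beta v + gamma * segre_chart (fun i => beta i * omega i) v.
Proof.
have -> : rbm_unnorm beta omega gamma v =
    segre_chart beta v * (1 + gamma * segre_chart omega v) by [].
by rewrite segre_chartM mulrDr mulr1 mulrCA.
Qed.

Lemma rbm_pointE beta omega gamma v :
  rbm_point beta omega gamma v =
  rbm_unnorm beta omega gamma v / \sum_(u : bitvec n) rbm_unnorm beta omega gamma u.
Proof. by []. Qed.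

Lemma segre_chart_gt0 b v : (forall i, 0 < b i) -> 0 < segre_chart b v.
Proof. by move=> b_gt0; apply: prodr_gt0 => i _; apply: exprn_gt0. Qed.

Section PositiveParameters.
Variables (beta omega : 'I_n -> R) (gamma : R).
Hypotheses (beta_gt0 : forall i, 0 < beta i) (omega_gt0 : forall i, 0 < omega i)
  (gamma_gt0 : 0 < gamma).

Lemma rbm_unnorm_gt0 v : 0 < rbm_unnorm beta omega gamma v.
Proof.
rewrite rbm_unnormE ltr_wpDr ?segre_chart_gt0 // mulr_ge0 ?ltW //.
by apply: segre_chart_gt0 => i; apply: mulr_gt0.
Qed.

Lemma rbm_partition_gt0 : 0 < \sum_(u : bitvec n) rbm_unnorm beta omega gamma u.
Proof.
rewrite (bigD1 [ffun=> false]) //= ltr_wpDr ?rbm_unnorm_gt0 //.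
by apply: sumr_ge0 => u _; apply/ltW/rbm_unnorm_gt0.
Qed.

Lemma rbm_point_gt0 v : 0 < rbm_point beta omega gamma v.
Proof. by rewrite divr_gt0 ?rbm_unnorm_gt0 ?rbm_partition_gt0. Qed.

End PositiveParameters.

Lemma rbm_cone_secant_param (r : bool * option ('I_n * bool) -> R) :
  (forall k, 0 < r k) -> cone_of_real (@rbm_model n) (fun v => toC (secant_param r v)).
Proof.
move=> r_gt0.
(* In the chart x_0 = 1 the [s]-th Segre point has coordinates [beta s]; the ratio
   of the two is [omega] and the ratio of the scaled coefficients is [gamma]. *)
pose beta s i := r (s, Some (i, true)) / r (s, Some (i, false)).
pose A s := \prod_(i < n) r (s, Some (i, false)).
pose omega i := beta true i / beta false i.
pose gamma := r (true, None) * A true / (r (false, None) * A false).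
have beta_gt0 s i : 0 < beta s i by rewrite divr_gt0.
have A_gt0 s : 0 < A s by apply: prodr_gt0.
have omega_gt0 i : 0 < omega i by rewrite divr_gt0.
have gamma_gt0 : 0 < gamma by rewrite !(divr_gt0, mulr_gt0).
pose Z := \sum_(u : bitvec n) rbm_unnorm (beta false) omega gamma u.
have Z_gt0 : 0 < Z by apply: rbm_partition_gt0.
pose c := r (false, None) * A false * Z.
have c_gt0 : 0 < c by rewrite !mulr_gt0.
exists (rbm_point (beta false) omega gamma), (toC c).
split; first by exists (beta false), omega, gamma.
split; first by rewrite fmorph_eq0 gt_eqF.
apply: functional_extensionality => v; rewrite -rmorphM; congr toC.
have omegaE : (fun i => beta false i * omega i) = beta true.
  by apply: functional_extensionality => i; rewrite mulrC divfK ?gt_eqF.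
rewrite rbm_pointE -/Z rbm_unnormE omegaE /secant_param big_bool /=.
rewrite !segre_vec_chart => [|i|i] /=; try by rewrite gt_eqF.
rewrite -/(A true) -/(A false).
have a_neq0 : r (false, None) * A false != 0 by rewrite gt_eqF ?mulr_gt0.
rewrite /c /gamma mulrACA divff ?gt_eqF // mulr1 mulrDr addrC mulrA; congr (_ + _).
by rewrite mulrA [X in _ = X]mulrA [_ * (_ / _)]mulrC divfK.
Qed.

End RBMParametrization.

Lemma rmorph_segre_chart (K L : comNzRingType) (f : {rmorphism K -> L}) n
    (b : 'I_n -> K) v :
  f (segre_chart b v) = segre_chart (f \o b) v.
Proof. by rewrite rmorph_prod; apply: eq_bigr => i _; rewrite rmorphXn. Qed.

Lemma rmorph_secant_param (K L : comNzRingType) (f : {rmorphism K -> L}) n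
    (p : bool * option ('I_n * bool) -> K) v :
  f (secant_param p v) = secant_param (f \o p) v.
Proof.
by rewrite rmorph_sum; apply: eq_bigr => s _; rewrite rmorphM rmorph_segre_vec.
Qed.

Section SecantLines.
Variable n : nat.

Lemma segre_cone_chart (b : 'I_n -> CC) : segre_cone (segre_chart b).
Proof.
exists (fun i => (1, b i)); split; first by move=> i; rewrite xpair_eqE oner_eq0.
by apply: functional_extensionality => v; rewrite segre_chartE.
Qed.

Lemma secant_union_chart_pair (b b' : 'I_n -> CC) (j : 'I_n) (l m : CC) (x : cvec n) :
  b j != b' j -> nonzero_vec x ->
  x = (fun v => l * segre_chart b v + m * segre_chart b' v) -> secant_union x.
Proof.
move=> bj x_neq0 xE; split => //.
exists (segre_chart b), (segre_chart b').
split; first exact: segre_cone_chart.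
split; first exact: segre_cone_chart.
split; last by exists l, m.
by move=> [d prop]; move/eqP: bj; apply; apply: segre_chart_inj prop j.
Qed.

Lemma secant_union_chart (hn : (0 < n)%N) (b b' : 'I_n -> CC) (l m : CC) (x : cvec n) :
  nonzero_vec x ->
  x = (fun v => l * segre_chart b v + m * segre_chart b' v) -> secant_union x.
Proof.
case: (boolP [exists j, b j != b' j]) => [/existsP[j bj] | /existsPn b_b'].
  exact: secant_union_chart_pair bj.
have -> : b' = b.
  by apply: functional_extensionality => i; move: (b_b' i); rewrite negbK => /eqP.
move=> x_neq0 xE.
apply: (@secant_union_chart_pair b (fun i => b i + 1) (Ordinal hn) (l + m) 0) => //.
  by rewrite -[X in X != _]addr0 (inj_eq (addrI _)) eq_sym oner_eq0.
by rewrite xE; apply: functional_extensionality => v; rewrite mul0r addr0 mulrDl.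
Qed.

Lemma rbm_cone_sub_secant_union (hn : (0 < n)%N) x :
  cone_of_real (@rbm_model n) x -> secant_union x.
Proof.
move=> [q [c [[beta [omega [gamma [beta_gt0 [omega_gt0 [gamma_gt0 ->]]]]]] [c_neq0 ->]]]].
pose Z := \sum_(u : bitvec n) rbm_unnorm beta omega gamma u.
apply: (@secant_union_chart hn (toC \o beta) (toC \o (fun i => beta i * omega i))
  (c / toC Z) (c * toC gamma / toC Z)).
  exists [ffun => false]; rewrite mulf_neq0 // fmorph_eq0 gt_eqF //.
  exact: rbm_point_gt0.
apply: functional_extensionality => v.
rewrite rbm_pointE rbm_unnormE -/Z rmorphM fmorphV rmorphD rmorphM !rmorph_segre_chart.
by rewrite mulrDl mulrDr !mulrA; congr (_ + _); apply: mulrAC.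
Qed.

End SecantLines.

Lemma rbm_vanishing_secant_union n (f : cpoly n) :
  (forall y, cone_of_real (@rbm_model n) y -> peval f y = 0) ->
  forall x, secant_union x -> peval f x = 0.
Proof.
move=> f_rbm x [_ [s [t [[a [_ ->]] [[b [_ ->]] [_ [l [m ->]]]]]]]].
have f_param p : peval f (secant_param p) = 0.
  apply: (@polynomial_in_each_coord_eq0 _ (fun p => peval f (secant_param p))).
    move=> {}p k; apply: polynomial_fun_meval => i.
    exact: polynomial_fun_secant_param.
  move=> r r_gt0; rewrite -(f_rbm _ (rbm_cone_secant_param r_gt0)); congr peval.
  by apply: functional_extensionality => v; rewrite rmorph_secant_param.
rewrite -(f_param (secant_coords l m a b)); congr peval.
by apply: functional_extensionality => v; rewrite secant_paramE.
Qed.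

Lemma zclosure_ext n (S T : cvec n -> Prop) :
  (forall f, (forall y, S y -> peval f y = 0) <-> (forall y, T y -> peval f y = 0)) ->
  forall x, zclosure S x <-> zclosure T x.
Proof.
by move=> ST x; split=> -[x_neq0 x_zero]; split=> // f f_hom /ST; apply: x_zero.
Qed.

Lemma tropicalization_ext n (V W : cvec n -> Prop) :
  (forall x, V x <-> W x) -> forall w, tropicalization V w <-> tropicalization W w.
Proof.
move=> VW w; split=> w_trop f f_zero; apply: w_trop => x /VW; exact: f_zero.
Qed.

Theorem corollary3p2 (n : nat) (hn : (1 <= n)%N) :
  (forall x : cvec n, rbm_variety x <-> secant_variety x) /\
  (forall w : bitvec n -> R,
     tropicalization (@rbm_variety n) w <-> tropicalization (@secant_variety n) w).
Proof.
have same_vanishing f : (forall y, cone_of_real (@rbm_model n) y -> peval f y = 0) <->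
    (forall y, secant_union y -> peval f y = 0).
  split; first exact: rbm_vanishing_secant_union.
  by move=> f_secant y /(rbm_cone_sub_secant_union hn); apply: f_secant.
have rbm_secant := zclosure_ext same_vanishing.
by split=> //; apply: tropicalization_ext.
Qed.
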